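(* Let $\mathbb{F}$ be the finite field of order $q$ and let $M_1$ and $M_2$ be orthogonal sudoku solutions of order $q^2$ generated by sudoku flags $Z_1=(g_1,V_1)$ and $Z_2=(g_2,V_2)$, respectively. If the composite solution $N_{12}$ is a sudoku solution, then it is a linear sudoku solution generated by the two-dimensional subspace $g_{12}=V_1\cap V_2$, i.e. for each symbol the set of locations of $N_{12}$ housing that symbol is a coset of $V_1\cap V_2$.
   Context: Locations of a sudoku solution of order $q^2$ are identified with vectors $(x_1,x_2,x_3,x_4)\in\mathbb{F}^4$: $x_1$ is the large row, $x_2$ the row within the large row, $x_3$ the large column, $x_4$ the column within the large column; rows, columns and subsquares are the sets of locations with fixed $(x_1,x_2)$, $(x_3,x_4)$, $(x_1,x_3)$ respectively. A sudoku solution of order $q^2$ assigns symbols $\{0,\dots,q^2-1\}$ to locations so that each symbol occurs exactly once in every row, column and subsquare; two are orthogonal if upon superimposition each ordered pair of symbols occurs exactly once. Each symbol $x=b_qq+b_1$ ($b_q,b_1\in\{0,\dots,q-1\}$) has radix digit $b_q$. The composite solution $N_{12}$ of $M_1,M_2$ assigns to each location the symbol $q\,r_1+r_2$, where $r_i$ is the radix digit of the symbol of $M_i$ at that location. A flag is a pair $(g,V)$ of subspaces of $\mathbb{F}^4$ with $\dim g=2$, $\dim V=3$, $g\subset V$; it is a sudoku flag if every coset of $g$ meets every row, column and subsquare in exactly one location. A sudoku solution $M$ generated by a sudoku flag $(g,V)$ is a sudoku solution of order $q^2$ in which each coset of $g$ is exactly the set of locations of one symbol and each coset of $V$ is exactly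 the set of locations whose symbols have one given radix digit. *)

From HB Require Import structures.
From mathcomp Require Import all_boot all_order all_algebra all_field.
Set Implicit Arguments. Unset Strict Implicit. Unset Printing Implicit Defensive.
Import GRing.Theory.
Local Open Scope ring_scope.

(* Locations are vectors (x1,x2,x3,x4) in F^4, encoded as row vectors 'rV[F]_4;
   coordinate x_(i+1) is  x 0 (ci).  *)
Definition c0 : 'I_4 := @Ordinal 4 0 isT.
Definition c1 : 'I_4 := @Ordinal 4 1 isT.
Definition c2 : 'I_4 := @Ordinal 4 2 isT.
Definition c3 : 'I_4 := @Ordinal 4 3 isT.

Section Sudoku.
Variable F : finFieldType.

Notation loc := 'rV[F]_4.
Definition ord_q : nat := #|F|.

Definition row_set (a b : F) : {set loc} := [set x : loc | (x 0 c0 == a) && (x 0 c1 == b)].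
Definition col_set (a b : F) : {set loc} := [set x : loc | (x 0 c2 == a) && (x 0 c3 == b)].
Definition box_set (a b : F) : {set loc} := [set x : loc | (x 0 c0 == a) && (x 0 c2 == b)].

Definition coset_of (U : {vspace loc}) (a : loc) : {set loc} :=
  [set x : loc | (x - a) \in U].

Definition sym_set (M : loc -> nat) (s : nat) : {set loc} := [set x : loc | M x == s].

Definition sudoku_solution (M : loc -> nat) : Prop :=
  (forall x, (M x < ord_q ^ 2)%N) /\
  forall s, (s < ord_q ^ 2)%N -> forall a b : F,
    [/\ #|sym_set M s :&: row_set a b| = 1%N,
        #|sym_set M s :&: col_set a b| = 1%N &
        #|sym_set M s :&: box_set a b| = 1%N].

Definition orthogonal_sol (M1 M2 : loc -> nat) : Prop :=
  forall s t, (s < ord_q ^ 2)%N -> (t < ord_q ^ 2)%N ->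
    #|sym_set M1 s :&: sym_set M2 t| = 1%N.

(* radix digit b_q of x = b_q q + b_1 *)
Definition radix (s : nat) : nat := (s %/ ord_q)%N.

Definition sudoku_flag (g V : {vspace loc}) : Prop :=
  [/\ \dim g = 2%N, \dim V = 3%N, (g <= V)%VS &
      forall (c : loc) (a b : F),
        [/\ #|coset_of g c :&: row_set a b| = 1%N,
            #|coset_of g c :&: col_set a b| = 1%N &
            #|coset_of g c :&: box_set a b| = 1%N]].

Definition generated_by_flag (M : loc -> nat) (g V : {vspace loc}) : Prop :=
  [/\ sudoku_flag g V, sudoku_solution M,
      (forall c : loc, exists s, coset_of g c = sym_set M s) &
      (forall c : loc, exists d, coset_of V c = [set x : loc | radix (M x) == d])].

Definition composite (M1 M2 : loc -> nat) : loc -> nat :=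
  fun x => (ord_q * radix (M1 x) + radix (M2 x))%N.

End Sudoku.

From HB Require Import structures.
From mathcomp Require Import all_boot all_order all_algebra all_field.
Set Implicit Arguments. Unset Strict Implicit. Unset Printing Implicit Defensive.
Import GRing.Theory.
Local Open Scope ring_scope.

(* Two points of a composite solution carry the same symbol exactly when they
   carry the same pair of radix digits, i.e. when they lie in a common coset of
   V1 and of V2, hence of V1 :&: V2.  So the symbol classes of N12 are cosets of
   V1 :&: V2.  Since N12 is a sudoku solution each symbol occurs once in each of
   the q^2 rows, so these cosets have q^2 = q^(dim (V1 :&: V2)) points. *)

Lemma base_digits_inj (q a b c d : nat) : (b < q)%N -> (d < q)%N ->
  (q * a + b = q * c + d)%N -> a = c /\ b = d.
Proof.
move=> bq dq e; have q_gt0 : (0 < q)%N by apply: leq_ltn_trans bq.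
have := congr1 (divn^~ q) e; have := congr1 (modn^~ q) e.
rewrite /= !(mulnC q) !modnMDl !divnMDl // !modn_small // !divn_small //.
by rewrite !addn0.
Qed.

Section Sudoku.
Variable F : finFieldType.
Notation loc := 'rV[F]_4.
Notation q := (ord_q F).

Lemma ord_q_gt1 : (1 < q)%N.
Proof. exact: finNzRing_gt1. Qed.

Lemma card_coset_of (U : {vspace loc}) c : #|coset_of U c| = (q ^ \dim U)%N.
Proof.
rewrite -card_vspace.
have -> : coset_of U c = (+%R^~ c) @: [set x | x \in U].
  apply/setP => x; rewrite inE; apply/idP/imsetP => [xcU | [y]].
    by exists (x - c); rewrite ?inE ?subrK.
  by rewrite inE => yU ->; rewrite addrK.
by rewrite card_imset; [apply: eq_card => x; rewrite inE | apply: addIr].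
Qed.

Lemma card_sym_set (N : loc -> nat) s : sudoku_solution N ->
  (s < q ^ 2)%N -> #|sym_set N s| = (q ^ 2)%N.
Proof.
case=> _ /(_ s) rows_s /rows_s {}rows_s.
pose row_of (x : loc) := (x 0 c0, x 0 c1).
rewrite -sum1_card (partition_big row_of xpredT) //=.
rewrite -[(q ^ 2)%N]card_prod -sum1_card; apply: eq_bigr => -[a b] _.
have [row_ab _ _] := rows_s a b.
rewrite sum1_card -[RHS]row_ab; apply: eq_card => x.
by rewrite unfold_in xpair_eqE !inE.
Qed.

Lemma radix_lt_ord_q (N : loc -> nat) x : sudoku_solution N ->
  (radix F (N x) < q)%N.
Proof.
case=> /(_ x) Nx_lt _; rewrite /radix ltn_divLR -?expnSr //.
exact: ltnW ord_q_gt1.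
Qed.

Lemma flag_space_radixE (M : loc -> nat) g V x y : generated_by_flag M g V ->
  ((x - y) \in V) = (radix F (M x) == radix F (M y)).
Proof.
case=> _ _ _ /(_ y) [d digit_d].
have /[!(digit_d, inE)] /eqP My : y \in coset_of V y by rewrite inE subrr mem0v.
by move/setP/(_ x): digit_d; rewrite !inE My.
Qed.

Lemma composite_sym_set (M1 M2 : loc -> nat) g1 V1 g2 V2 y :
  generated_by_flag M1 g1 V1 -> generated_by_flag M2 g2 V2 ->
  sym_set (composite M1 M2) (composite M1 M2 y) = coset_of (V1 :&: V2)%VS y.
Proof.
move=> M1flag M2flag; have [_ M2sol _ _] := M2flag.
apply/setP => x; rewrite !inE memv_cap.
rewrite (flag_space_radixE _ _ M1flag) (flag_space_radixE _ _ M2flag).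
rewrite /composite; apply/eqP/andP => [same_symbol|[/eqP-> /eqP->]] //.
have M2x_lt := radix_lt_ord_q _ M2sol.
by have [-> ->] := base_digits_inj (M2x_lt x) (M2x_lt y) same_symbol; rewrite !eqxx.
Qed.

End Sudoku.

Theorem proposition4p7 (F : finFieldType) (M1 M2 : 'rV[F]_4 -> nat)
  (g1 V1 g2 V2 : {vspace 'rV[F]_4}) :
  generated_by_flag M1 g1 V1 ->
  generated_by_flag M2 g2 V2 ->
  orthogonal_sol M1 M2 ->
  sudoku_solution (composite M1 M2) ->
  \dim (V1 :&: V2)%VS = 2%N /\
  (forall s, (s < ord_q F ^ 2)%N ->
     exists c : 'rV[F]_4, sym_set (composite M1 M2) s = coset_of (V1 :&: V2)%VS c).
Proof.
move=> M1flag M2flag _ Nsol.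
have sym_coset s : (s < ord_q F ^ 2)%N ->
    exists c, sym_set (composite M1 M2) s = coset_of (V1 :&: V2)%VS c.
  move=> s_lt; have /card_gt0P[y] : (0 < #|sym_set (composite M1 M2) s|)%N.
    by rewrite card_sym_set // expn_gt0 ltnW ?ord_q_gt1.
  rewrite inE => /eqP <-; exists y; exact: composite_sym_set M1flag M2flag.
split=> //.
have q2_gt0 : (0 < ord_q F ^ 2)%N by rewrite expn_gt0 ltnW ?ord_q_gt1.
have [c sym0] := sym_coset 0%N q2_gt0.
have := card_sym_set Nsol q2_gt0.
by rewrite sym0 card_coset_of => /eqP; rewrite eqn_exp2l ?ord_q_gt1 // => /eqP.
Qed.
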